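(* Let $n\ge -1$ and let $C_n$ be the cochain complex described in the context. Every admissible monomial $v_0^{k_0}v_1^{k_1}\cdots v_n^{k_n}R^{a_1}R^{a_2}\cdots R^{a_m}y_1$ in which all of $a_1,\dots,a_m$ are odd is a cocycle in $C_n$.
   Context: Work at the prime $2$. Fix an integer $n\ge -1$. Consider formal monomials $v_0^{k_0}\cdots v_n^{k_n}R^{a_1}\cdots R^{a_m}y_k$ with $k_i\ge 0$, $m\ge 0$, integers $a_i$, and $k\ge 1$. Such a monomial is admissible if $a_i\ge 2a_{i+1}$ for $1\le i<m$ and $a_m\ge 2^{k+1}$ (when $m\ge1$). $C_n$ has $\mathbb{F}_2$-basis the admissible monomials. Gradings: the filtration of a monomial is $s=\sum k_i + m$; its homological degree $h$ is defined by $h(y_k)=2^{k+1}-2$, each $R^a$ adds $a-1$, each $v_i$ subtracts $2^{i+1}-1$; its total degree is $-h-s$. Non-admissible expressions are rewritten in the basis using: $v_iv_j=v_jv_i$; $R^a v_i=\sum_{i<j\le n} v_j R^{a-2^{i+1}+2^{j+1}}$ (so $R^av_n=0$); the Adem relation $R^aR^b=\sum_c\binom{b-1-c}{a-2c}R^{a+b-c}R^c$ for $a<2b$; and instability: $R^c z=0$ whenever $z$ is a monomial with $h(z)\ge c-1$. The differential $d$ is $\mathbb{F}_2$-linear, raises filtration by $1$ and lowers total degree by $1$, and is determined by $dy_k=\sum_{1\le j<k}R^{2^{k+1}-2^{j+1}+1}y_j$ (so $dy_1=0$), $d(v_ix)=v_i\,dx$, and $d(R^ax)=R^a(dx)+(a+1)\sum_{0\le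 j\le n}v_jR^{a+2^{j+1}-1}x$, followed by rewriting in the basis. (This is the Koszul complex computing $\mathrm{Ext}_{E(n)R}(QH_*BP,\mathbb{F}_2)$.) *)

From mathcomp Require Import all_boot all_order all_algebra.
Set Implicit Arguments. Unset Strict Implicit. Unset Printing Implicit Defensive.
Import Order.TTheory GRing.Theory Num.Theory.
Local Open Scope ring_scope.

(* Generators: [inl i] is v_i, [inr a] is R^a. *)
Definition gen := (nat + int)%type.
Definition vg (i : nat) : gen := inl i.
Definition Rg (a : int) : gen := inr a.

(* A formal monomial  g_1 ... g_r y_k  is the pair ([g_1;...;g_r], k). *)
Definition word := (seq gen * nat)%type.

(* A formal F_2-linear combination of words: a list, the coefficient of a
   word being the parity of its number of occurrences. *)
Definition fsum := seq word.

Definition hgen (g : gen) : int :=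
  match g with inl i => 1 - 2 ^+ i.+1 | inr a => a - 1 end.
Definition hword (w : word) : int :=
  \sum_(g <- w.1) hgen g + (2 ^+ w.2.+1 - 2).

(* words of C_n, with N = n+1 the number of v's: v_i with i <= n, y_k with k >= 1 *)
Definition valid_gen (N : nat) (g : gen) : bool :=
  match g with inl i => (i < N)%N | inr _ => true end.
Definition valid_word (N : nat) (w : word) : bool :=
  all (valid_gen N) w.1 && (0 < w.2)%N.

Definition ctx (P u : seq gen) (s : word) : word := (P ++ u ++ s.1, s.2).

Definition adem_cs (a b : int) : seq int :=
  [seq c <- [seq a - b + 1 + (k%:Z) | k <- iota 0 (absz (2 * b - a)%R)]
     | [&& 0 <= a - 2 * c, a - 2 * c <= b - 1 - c
         & odd 'C(absz (b - 1 - c)%R, absz (a - 2 * c)%R)]].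

(* Generators (as formal sums "lhs + rhs") of the subspace of relations. *)
Inductive relgen (N : nat) : fsum -> Prop :=
| rel_comm (P : seq gen) (s : word) (i j : nat) :
    valid_word N (ctx P [::] s) -> (i < N)%N -> (j < N)%N ->
    relgen N [:: ctx P [:: vg i; vg j] s; ctx P [:: vg j; vg i] s]
| rel_Rv (P : seq gen) (s : word) (a : int) (i : nat) :
    valid_word N (ctx P [::] s) -> (i < N)%N ->
    relgen N (ctx P [:: Rg a; vg i] s ::
      [seq ctx P [:: vg j; Rg (a - 2 ^+ i.+1 + 2 ^+ j.+1)] s
        | j <- iota i.+1 (N - i.+1)])
| rel_adem (P : seq gen) (s : word) (a b : int) :
    valid_word N (ctx P [::] s) -> a < 2 * b ->
    relgen N (ctx P [:: Rg a; Rg b] s ::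
      [seq ctx P [:: Rg (a + b - c); Rg c] s | c <- adem_cs a b])
| rel_unstable (P : seq gen) (z : word) (c : int) :
    valid_word N (ctx P [::] z) -> c - 1 <= hword z ->
    relgen N [:: ctx P [:: Rg c] z].

Definition in_rel_span (N : nat) (x : fsum) : Prop :=
  exists gs : seq fsum, (forall g, g \in gs -> relgen N g) /\
    forall w : word, odd (count_mem w x) = odd (count_mem w (flatten gs)).

Definition dy (k : nat) : fsum :=
  [seq ([:: Rg (2 ^+ k.+1 - 2 ^+ j.+1 + 1)], j) | j <- iota 1 k.-1].

Fixpoint dgens (N : nat) (u : seq gen) (k : nat) : fsum :=
  match u with
  | [::] => dy k
  | g :: u' =>
      [seq (g :: w.1, w.2) | w <- dgens N u' k] ++
      match g with
      | inl _ => [::]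
      | inr a => if odd (absz (a + 1)%R) then
                   [seq (vg j :: Rg (a + 2 ^+ j.+1 - 1) :: u', k) | j <- iota 0 N]
                 else [::]
      end
  end.

Definition dword (N : nat) (w : word) : fsum := dgens N w.1 w.2.

Definition is_cocycle (N : nat) (w : word) : Prop := in_rel_span N (dword N w).

Definition monomial (N : nat) (ks : seq nat) (s : seq int) (k : nat) : word :=
  (flatten [seq nseq (nth 0%N ks i) (vg i) | i <- iota 0 N] ++ map Rg s, k).

Definition admissible (s : seq int) (k : nat) : bool :=
  sorted (fun x y => 2 * y <= x) s && ((s == [::]) || (2 ^+ k.+1 <= last 0 s)).

(* Over F_2 the correction term (a+1) sum_j v_j R^(a+2^(j+1)-1) x of d(R^a x)
   vanishes when a is odd, and d commutes with the v_i, so d of a word whose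
   R-exponents are all odd is that word times d y_k.  Since d y_1 = 0, the
   differential of such a word ending in y_1 is zero already as a formal sum,
   without using any relation. *)
From mathcomp Require Import all_boot all_order all_algebra.
Import Order.TTheory GRing.Theory Num.Theory.
Local Open Scope ring_scope.

Definition odd_Rgen (g : gen) : bool :=
  if g is inr a then odd (absz a) else true.

Lemma odd_absz_addr1 (a : int) : odd (absz (a + 1)) = ~~ odd (absz a).
Proof.
case: a => m; first by rewrite -PoszD addn1.
have -> : Negz m + 1 = - (Posz m) by rewrite NegzE -addn1 PoszD opprD addrK.
by rewrite abszN /= negbK.
Qed.

Lemma dgens_odd_Rgen (N : nat) (u : seq gen) (k : nat) :
  all odd_Rgen u -> dgens N u k = [seq (u ++ w.1, w.2) | w <- dy k].
Proof.
elim: u => [|g u IHu] /=; first by rewrite map_id_in // => -[].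
move=> /andP [odd_g odd_u]; rewrite IHu // -map_comp.
case: g odd_g => [i|a] //= odd_a; last rewrite odd_absz_addr1 odd_a.
all: by rewrite cats0.
Qed.

Lemma dgens_odd_Rgen_y1 (N : nat) (u : seq gen) :
  all odd_Rgen u -> dgens N u 1 = [::].
Proof. by move/dgens_odd_Rgen->. Qed.

Lemma monomial_odd_Rgen (N : nat) (ks : seq nat) (s : seq int) (k : nat) :
  all (fun a : int => odd (absz a)) s -> all odd_Rgen (monomial N ks s k).1.
Proof.
move=> odd_s; rewrite all_cat all_map; apply/andP; split; last exact: odd_s.
by apply/allP => g /flattenP [_ /mapP [i _ ->]] /nseqP [-> _].
Qed.

Lemma in_rel_span_nil (N : nat) : in_rel_span N [::].
Proof. by exists [::]. Qed.

Theorem mainTheorem4 (n : int) (ks : seq nat) (s : seq int) :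
  -1 <= n ->
  size ks = (absz (n + 1)%R) ->
  admissible s 1 ->
  all (fun a : int => odd (absz a)) s ->
  is_cocycle (absz (n + 1)%R) (monomial (absz (n + 1)%R) ks s 1).
Proof.
move=> _ _ _ odd_s.
rewrite /is_cocycle /dword dgens_odd_Rgen_y1; first exact: in_rel_span_nil.
exact: monomial_odd_Rgen.
Qed.
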